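(* Let $n\ge 3$ and $u,v,w>0$. Let $A\in\mathbb{R}^{n\times n}$ be the Toeplitz matrix with $A_{ii}=w$ for all $i$, $A_{i,i+1}=u$ and $A_{i+1,i}=v$ for $i=1,\dots,n-1$, $A_{1n}=u$, $A_{n1}=v$, and all other entries $0$; that is, $$A=\begin{pmatrix} w & u & 0 & \cdots & 0 & u\\ v & w & u & \cdots & 0 & 0\\ 0 & v & w & \ddots & & \vdots\\ \vdots & & \ddots & \ddots & \ddots & 0\\ 0 & & & v & w & u\\ v & 0 & \cdots & 0 & v & w\end{pmatrix}.$$ Then $r(t):=r\big((1-t)A+tA^{\top}\big)$ is concave in $t$ for $t\in(0,1)$, strictly concave if $u\ne v$.
   Context: $r(M)$ denotes the spectral radius of a square matrix $M$. *)

From HB Require Import structures.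
From mathcomp Require Import all_boot all_order all_algebra.
From mathcomp Require Import complex.
From mathcomp Require Import boolp classical_sets reals.
Set Implicit Arguments. Unset Strict Implicit. Unset Printing Implicit Defensive.
Import Order.TTheory GRing.Theory Num.Theory.
Local Open Scope ring_scope.
Local Open Scope classical_set_scope.

Definition cmod (R : rcfType) (z : R[i]) : R :=
  let: Complex a b := z in Num.sqrt (a ^+ 2 + b ^+ 2).

Definition ceig (R : rcfType) (n : nat) (M : 'M[R]_n) : set R[i] :=
  [set z | root (char_poly (map_mx (fun x : R => (x%:C)%C) M)) z].

Definition spectral_radius (R : realType) (n : nat) (M : 'M[R]_n) : R :=
  sup [set cmod z | z in ceig M].

(* The Toeplitz matrix of the statement (0-based indices):
   diagonal w, superdiagonal u, subdiagonal v, A_{1n} = u, A_{n1} = v. *)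
Definition toepA (R : pzRingType) (n : nat) (u v w : R) : 'M[R]_n :=
  \matrix_(i < n, j < n)
    if i == j :> nat then w
    else if (j == i.+1 :> nat) || ((i == 0%N :> nat) && (j == n.-1 :> nat)) then u
    else if (i == j.+1 :> nat) || ((j == 0%N :> nat) && (i == n.-1 :> nat)) then v
    else 0.

Definition concave_on01 (R : realType) (f : R -> R) : Prop :=
  forall x y s : R, 0 < x < 1 -> 0 < y < 1 -> 0 <= s <= 1 ->
    (1 - s) * f x + s * f y <= f ((1 - s) * x + s * y).

Definition strictly_concave_on01 (R : realType) (f : R -> R) : Prop :=
  forall x y s : R, 0 < x < 1 -> 0 < y < 1 -> x != y -> 0 < s < 1 ->
    (1 - s) * f x + s * f y < f ((1 - s) * x + s * y).

(* Write a = (1-t) u + t v and b = (1-t) v + t u, so that (1-t) A + t A^T = toepA n a b w.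
   If z > 0 solves b z^n = a, the positive row vector (z^i)_i is a left eigenvector for
   the eigenvalue w + b (z + z^(n-1)), which is therefore the spectral radius of this
   nonnegative matrix (Perron bound).  By weighted AM-GM, b (z + z^(n-1)) is the minimum
   over y > 0 of a function linear in (a, b), hence affine in t: r is a pointwise minimum
   of affine functions, so it is concave.  The minimum is attained exactly at the root y
   of b y^n = a; for u != v the ratio a / b is injective in t, so distinct t have
   distinct minimizers, which makes the concavity strict. *)

From HB Require Import structures.
From mathcomp Require Import all_boot all_order all_algebra.
From mathcomp Require Import complex.
From mathcomp Require Import classical_sets reals.
From mathcomp Require Import ring lra zify.

Set Implicit Arguments.
Unset Strict Implicit.
Unset Printing Implicit Defensive.

Import Order.TTheory GRing.Theory Num.Theory.
Local Open Scope ring_scope.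

Section SpectralRadius.
Variable R : realType.
Import Normc.

Lemma cmodE (z : R[i]) : cmod z = normc z. Proof. by case: z. Qed.

Lemma normc_real (c : R) : 0 <= c -> normc (c%:C)%C = c.
Proof. by move=> c0; rewrite /= expr0n addr0 sqrtr_sqr ger0_norm. Qed.

Lemma normc_sum n (F : 'I_n -> R[i]) : normc (\sum_i F i) <= \sum_i normc (F i).
Proof. exact: (@ler_norm_sum _ (Rcomplex R)). Qed.

Lemma normc_gt0 (z : R[i]) : z != 0 -> 0 < normc z.
Proof.
move=> z0; rewrite lt_def (contra_neq (@eq0_normc R z)) //=.
by case: z {z0} => a b /=; rewrite sqrtr_ge0.
Qed.

Lemma ceig_eigenrow n (M : 'M[R]_n) (p : 'rV[R]_n) lam :
  p != 0 -> p *m M = lam *: p -> ceig M (lam%:C)%C.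
Proof.
move=> p0 pM; rewrite /ceig /= -eigenvalue_root_char; apply/eigenvalueP.
exists (map_mx (real_complex R) p); first by rewrite -map_mxM pM map_mxZ.
by rewrite map_mx_eq0.
Qed.

Lemma ceig_norm_le n (M : 'M[R]_n) (p : 'rV[R]_n) lam :
  (forall i j, 0 <= M i j) -> (forall j, 0 < p 0 j) -> p *m M = lam *: p ->
  forall mu, ceig M mu -> cmod mu <= lam.
Proof.
move=> M_ge0 p_gt0 pM mu; rewrite /ceig /= -eigenvalue_root_char.
move=> /eigenvalueP [x xM x0]; rewrite cmodE.
have [j0 xj0] : exists j0, x 0 j0 != 0.
  apply/existsP; apply: contraNT x0; rewrite negb_exists => /forallP x_eq0.
  by apply/eqP/rowP => j; rewrite mxE; apply/eqP/negbNE.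
(* compare |x| with the Perron vector at the index where |x_j| / p_j is largest *)
pose ratio j := normc (x 0 j) / p 0 j.
have [j _ ratio_max] := @arg_maxP _ _ _ j0 xpredT ratio isT.
have ratio_gt0 : 0 < ratio j.
  by apply: lt_le_trans (ratio_max j0 isT); rewrite divr_gt0 ?normc_gt0.
have x_le i : normc (x 0 i) <= ratio j * p 0 i.
  by rewrite -ler_pdivrMr //; exact: ratio_max.
have xj : normc (x 0 j) = ratio j * p 0 j by rewrite divfK ?gt_eqF.
have : normc mu * (ratio j * p 0 j) <= lam * (ratio j * p 0 j).
  have /rowP/(_ j) := xM; have /rowP/(_ j) := pM; rewrite !mxE => pMj xMj.
  rewrite -[in leLHS]xj -normcM -xMj mulrCA -pMj mulr_sumr.
  apply: le_trans (normc_sum _) _; apply: ler_sum => i _.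
  by rewrite mxE normcM normc_real // mulrA; exact: ler_wpM2r (M_ge0 i j) _ _ (x_le i).
by rewrite ler_pM2r // mulr_gt0.
Qed.

Lemma spectral_radius_eigenrow n (M : 'M[R]_n) (p : 'rV[R]_n) lam :
  (0 < n)%N -> (forall i j, 0 <= M i j) -> (forall j, 0 < p 0 j) ->
  p *m M = lam *: p -> 0 <= lam -> spectral_radius M = lam.
Proof.
move=> n_gt0 M_ge0 p_gt0 pM lam_ge0.
rewrite /spectral_radius; set S := (X in sup X).
have lam_in : S lam.
  exists (lam%:C)%C; last by rewrite cmodE normc_real.
  apply: ceig_eigenrow pM; apply/eqP => /rowP/(_ (Ordinal n_gt0)).
  by rewrite mxE => /eqP; rewrite (gt_eqF (p_gt0 _)).
have lam_ub : ubound S lam.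
  by move=> _ [z Mz <-]; exact: ceig_norm_le pM _ Mz.
have S_sup : has_sup S by split; exists lam.
apply/le_anti/andP; split; first exact: ge_sup (proj1 S_sup) lam_ub.
exact: sup_upper_bound S_sup _ lam_in.
Qed.
End SpectralRadius.

Lemma big_ord_cond_seq (V : nmodType) n (P : pred nat) (F : nat -> V) (s : seq nat) :
  uniq s -> all (gtn n) s -> (forall i, (i < n)%N -> P i = (i \in s)) ->
  \sum_(i < n | P i) F i = \sum_(k <- s) F k.
Proof.
move=> s_uniq /allP s_lt Ps; rewrite -big_mkord -big_filter; apply: perm_big.
apply: uniq_perm; rewrite ?filter_uniq ?iota_uniq // => k.
rewrite mem_filter mem_iota add0n subn0 /=.
by case: ltnP => [k_lt|k_ge]; rewrite ?andbT ?andbF ?Ps //; apply/esym/negP => /s_lt /=; lia.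
Qed.

Section Toeplitz.
Variable R : pzRingType.
Implicit Types u v w : R.

Lemma toepA_tr n u v w : (2 < n)%N -> (toepA n u v w)^T = toepA n v u w.
Proof.
move=> n_gt2; apply/matrixP => i j; rewrite !mxE.
have := ltn_ord i; have := ltn_ord j.
by repeat case: ifP; move=> *; first [done | lia].
Qed.

Lemma toepA_lincomb n c1 c2 u1 v1 w1 u2 v2 w2 :
  c1 *: toepA n u1 v1 w1 + c2 *: toepA n u2 v2 w2 =
  toepA n (c1 * u1 + c2 * u2) (c1 * v1 + c2 * v2) (c1 * w1 + c2 * w2).
Proof. by apply/matrixP => i j; rewrite !mxE; repeat case: ifP; rewrite ?mulr0 ?addr0. Qed.
End Toeplitz.

Lemma toepA_ge0 (R : numDomainType) n (u v w : R) :
  0 <= u -> 0 <= v -> 0 <= w -> forall i j, 0 <= toepA n u v w i j.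
Proof. by move=> *; rewrite mxE; repeat case: ifP. Qed.

Lemma toepA_eigenrow (R : comRingType) n (a b w z : R) : (2 < n)%N -> b * z ^+ n = a ->
  (\row_(i < n) z ^+ i) *m toepA n a b w = (w + b * (z + z ^+ n.-1)) *: \row_(i < n) z ^+ i.
Proof.
case: n => [|[|[|k]]] // _ bza; apply/rowP => j; rewrite !mxE.
pose dg i := (i == j :> nat).
pose up i := ((j == i.+1 :> nat) || ((i == 0) && (j == k.+2 :> nat)))%N.
pose dn i := ((i == j.+1) || ((j == 0 :> nat) && (i == k.+2)))%N.
have -> : \sum_i (\row_(i < k.+3) z ^+ i) 0 i * toepA k.+3 a b w i j =
    w * \sum_(i < k.+3 | dg i) z ^+ i + a * \sum_(i < k.+3 | up i) z ^+ i
    + b * \sum_(i < k.+3 | dn i) z ^+ i.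
  rewrite (big_mkcond (fun i : 'I_k.+3 => dg i)).
  rewrite (big_mkcond (fun i : 'I_k.+3 => up i)) (big_mkcond (fun i : 'I_k.+3 => dn i)).
  rewrite !mulr_sumr -!big_split /=; apply: eq_bigr => i _; rewrite !mxE.
  have := ltn_ord i; have := ltn_ord j; rewrite /dg /up /dn.
  by repeat case: ifP; move=> *; try lia; ring.
have j_lt := ltn_ord j.
have [j0|j_gt0] := posnP j.
  rewrite (@big_ord_cond_seq _ _ dg _ [:: 0%N]) ?(@big_ord_cond_seq _ _ up _ [::])
    ?(@big_ord_cond_seq _ _ dn _ [:: 1%N; k.+2]);
    try by move=> *; rewrite /= /dg /up /dn ?in_nil ?inE; lia.
  by rewrite !big_cons !big_nil j0; ring.
have [jn|jn] := eqVneq (j : nat) k.+2.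
  rewrite (@big_ord_cond_seq _ _ dg _ [:: k.+2]) ?(@big_ord_cond_seq _ _ up _ [:: k.+1; 0%N])
    ?(@big_ord_cond_seq _ _ dn _ [::]);
    try by move=> *; rewrite /= /dg /up /dn ?in_nil ?inE; lia.
  by rewrite !big_cons !big_nil jn -bza !exprS; ring.
rewrite (@big_ord_cond_seq _ _ dg _ [:: j : nat]) ?(@big_ord_cond_seq _ _ up _ [:: j.-1])
  ?(@big_ord_cond_seq _ _ dn _ [:: j.+1]);
  try by move=> *; rewrite /= /dg /up /dn ?in_nil ?inE; lia.
by rewrite !big_cons !big_nil -[nat_of_ord j](prednK j_gt0) -bza !exprS; ring.
Qed.

Lemma exists_pos_root (R : rcfType) n (a b : R) : (0 < n)%N -> 0 < a -> 0 < b ->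
  exists2 z : R, 0 < z & b * z ^+ n = a.
Proof.
move=> n_gt0 a_gt0 b_gt0; pose c := a / b; pose p := 'X^n - c%:P.
have c_gt0 : 0 < c by rewrite divr_gt0.
have p_sign : p.[0] <= 0 <= p.[1 + c].
  rewrite !hornerE expr0n gtn_eqF //= sub0r oppr_le0 ltW //= subr_ge0.
  by apply: le_trans (ler_eXnr _ _) => //; lra.
have [z /andP[z_ge0 _]] := poly_ivt (addr_ge0 ler01 (ltW c_gt0)) p_sign.
rewrite /root !hornerE subr_eq0 => /eqP zc; exists z.
  rewrite lt_def z_ge0 andbT.
  by apply: contraTneq c_gt0 => z0; rewrite -zc z0 expr0n gtn_eqF ?ltxx.
by rewrite zc mulrC divfK ?gt_eqF.
Qed.

Section Majorant.
Variable R : realFieldType.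
Implicit Types a b x y z : R.

(* The AM-GM defect of m copies of y^(m+1) and one copy of x^(m+1). *)
Definition amgm_gap m x y := m%:R * y ^+ m.+1 + x ^+ m.+1 - m.+1%:R * x * y ^+ m.

Lemma amgm_gapS m x y :
  amgm_gap m.+1 x y = x * amgm_gap m x y + m.+1%:R * y ^+ m * (x - y) ^+ 2.
Proof. by rewrite /amgm_gap !exprS -[m.+2]addn1 -[m.+1]addn1 !natrD; ring. Qed.

Lemma amgm_gap_ge0 m x y : 0 <= x -> 0 <= y -> 0 <= amgm_gap m x y.
Proof.
move=> x_ge0 y_ge0; elim: m => [|m IH].
  by have -> : amgm_gap 0 x y = 0 by rewrite /amgm_gap; ring.
rewrite amgm_gapS; apply: addr_ge0; first exact: mulr_ge0.
by rewrite mulr_ge0 ?sqr_ge0 // mulr_ge0 ?exprn_ge0.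
Qed.

Lemma amgm_gap_gt0 m x y : 0 <= x -> 0 < y -> x != y -> 0 < amgm_gap m.+1 x y.
Proof.
move=> x_ge0 y_gt0 xy; rewrite amgm_gapS ltr_wpDl ?mulr_ge0 ?amgm_gap_ge0 ?(ltW y_gt0) //.
by rewrite mulr_gt0 ?exprn_even_gt0 //= ?subr_eq0 // mulr_gt0 ?exprn_gt0.
Qed.

Lemma amgm_gap_id m x : amgm_gap m x x = 0.
Proof. by rewrite /amgm_gap exprS -[m.+1]addn1 natrD; ring. Qed.

(* For b z^(m+1) = a, weighted AM-GM gives m (b y) + a / y^m >= (m+1) b z and
   m a / y + b y^m >= (m+1) b z^m, with equality at y = z. *)
Definition majorant m a b y :=
  (m%:R * b * y + a / y ^+ m + m%:R * a / y + b * y ^+ m) / m.+1%:R.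

Lemma majorant_subE m a b y z : 0 < y -> b * z ^+ m.+1 = a ->
  majorant m a b y - b * (z + z ^+ m) =
  b * (amgm_gap m z y / y ^+ m + amgm_gap m y z / y) / m.+1%:R.
Proof.
move=> y_gt0 <-; rewrite /majorant /amgm_gap.
rewrite !exprS -[m.+1]addn1 natrD; field.
by rewrite natr1 pnatr_eq0 expf_neq0 ?gt_eqF.
Qed.

Lemma majorant_ge m a b y z : 0 < y -> 0 < z -> 0 < b -> b * z ^+ m.+1 = a ->
  b * (z + z ^+ m) <= majorant m a b y.
Proof.
move=> y_gt0 z_gt0 b_gt0 bza; rewrite -subr_ge0 majorant_subE //.
apply: divr_ge0 => //; apply: mulr_ge0; first exact: ltW.
by apply: addr_ge0; apply: divr_ge0; rewrite ?amgm_gap_ge0 ?exprn_ge0 ?ltW.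
Qed.

Lemma majorant_gt m a b y z : (0 < m)%N -> 0 < y -> 0 < z -> 0 < b ->
  b * z ^+ m.+1 = a -> y != z -> b * (z + z ^+ m) < majorant m a b y.
Proof.
case: m => // m _ y_gt0 z_gt0 b_gt0 bza yz.
rewrite -subr_gt0 majorant_subE // divr_gt0 // mulr_gt0 // ltr_wpDr //.
  by rewrite divr_ge0 ?amgm_gap_ge0 ?ltW.
by rewrite divr_gt0 ?exprn_gt0 // amgm_gap_gt0 ?(ltW z_gt0) // eq_sym.
Qed.

Lemma majorant_eq m a b z : 0 < z -> b * z ^+ m.+1 = a -> majorant m a b z = b * (z + z ^+ m).
Proof.
move=> z_gt0 bza; apply/eqP; rewrite -subr_eq0 majorant_subE //.
by rewrite amgm_gap_id !mul0r addr0 mulr0 mul0r.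
Qed.
End Majorant.

Section ToeplitzSpectralRadius.
Variables (R : realType) (m : nat) (a b w : R).
Hypotheses (m_gt1 : (1 < m)%N) (a_gt0 : 0 < a) (b_gt0 : 0 < b) (w_ge0 : 0 <= w).

Lemma spectral_radius_toepA z : 0 < z -> b * z ^+ m.+1 = a ->
  spectral_radius (toepA m.+1 a b w) = w + b * (z + z ^+ m).
Proof.
move=> z_gt0 bza; apply: (spectral_radius_eigenrow (p := \row_(i < m.+1) z ^+ i)) => //.
- exact: toepA_ge0 (ltW a_gt0) (ltW b_gt0) w_ge0.
- by move=> j; rewrite mxE exprn_gt0.
- exact: toepA_eigenrow.
- by rewrite addr_ge0 // mulr_ge0 ?addr_ge0 ?exprn_ge0 ?(ltW b_gt0) ?(ltW z_gt0).
Qed.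

Lemma spectral_radius_toepA_le y : 0 < y ->
  spectral_radius (toepA m.+1 a b w) <= w + majorant m a b y.
Proof.
move=> y_gt0; have [z z_gt0 bza] := exists_pos_root (ltn0Sn m) a_gt0 b_gt0.
by rewrite (spectral_radius_toepA z_gt0 bza) lerD2l (majorant_ge y_gt0 z_gt0 b_gt0 bza).
Qed.

Lemma spectral_radius_toepA_eqP y : 0 < y ->
  spectral_radius (toepA m.+1 a b w) = w + majorant m a b y <-> b * y ^+ m.+1 = a.
Proof.
move=> y_gt0; split => [|bya]; last by rewrite (spectral_radius_toepA y_gt0 bya) majorant_eq.
have [z z_gt0 bza] := exists_pos_root (ltn0Sn m) a_gt0 b_gt0; rewrite (spectral_radius_toepA z_gt0 bza).
have [-> //|yz /addrI] := eqVneq y z.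
by move/eqP; rewrite lt_eqF // (majorant_gt (ltnW m_gt1) y_gt0 z_gt0 b_gt0 bza yz).
Qed.
End ToeplitzSpectralRadius.

Lemma convex_comb01 (R : realFieldType) (x1 x2 s : R) :
  0 < x1 < 1 -> 0 < x2 < 1 -> 0 <= s <= 1 -> 0 < (1 - s) * x1 + s * x2 < 1.
Proof.
move=> /andP[? ?] /andP[? ?] /andP[? ?].
by apply/andP; split; case: (lerP x1 x2) => ?; nra.
Qed.

Section ConcaveInfAffine.
Variables (R : realType) (T : Type) (Y : T -> Prop) (f : R -> R) (P : R -> T -> R).
Hypothesis P_affine : forall y x1 x2 s,
  P ((1 - s) * x1 + s * x2) y = (1 - s) * P x1 y + s * P x2 y.
Hypothesis f_le : forall t y, 0 < t < 1 -> Y y -> f t <= P t y.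
Hypothesis f_attained : forall t, 0 < t < 1 -> exists2 y, Y y & f t = P t y.

Lemma concave_on01_inf_affine : concave_on01 f.
Proof.
move=> x1 x2 s x1_01 x2_01 s01.
have [y Yy ->] := f_attained (convex_comb01 x1_01 x2_01 s01).
case/andP: s01 => s_ge0 s_le1.
by rewrite P_affine lerD // ler_wpM2l ?subr_ge0 ?f_le.
Qed.

Hypothesis minimizers_disjoint : forall t1 t2 y, 0 < t1 < 1 -> 0 < t2 < 1 ->
  t1 != t2 -> Y y -> f t2 = P t2 y -> f t1 < P t1 y.

Lemma strictly_concave_on01_inf_affine : strictly_concave_on01 f.
Proof.
move=> x1 x2 s x1_01 x2_01 x12 /andP[s_gt0 s_lt1].
have s01 : 0 <= s <= 1 by rewrite !ltW.
have t01 := convex_comb01 x1_01 x2_01 s01.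
have [y Yy ft] := f_attained t01.
have x1_neq : x1 != (1 - s) * x1 + s * x2.
  rewrite eq_sym -subr_eq0 (_ : _ - _ = s * (x2 - x1)); last by ring.
  by rewrite mulf_neq0 ?(gt_eqF s_gt0) // subr_eq0 eq_sym.
rewrite ft P_affine ltr_leD //.
  by rewrite ltr_pM2l ?subr_gt0 // (minimizers_disjoint x1_01 t01 x1_neq Yy ft).
by rewrite ler_wpM2l ?(ltW s_gt0) ?f_le.
Qed.
End ConcaveInfAffine.

Theorem theorem4 (R : realType) (n : nat) (u v w : R) :
  (3 <= n)%N -> 0 < u -> 0 < v -> 0 < w ->
  let A : 'M[R]_n := toepA n u v w in
  let r := fun t : R => spectral_radius ((1 - t) *: A + t *: A^T) in
  concave_on01 r /\ (u != v -> strictly_concave_on01 r).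
Proof.
case: n => [|m] // m_gt1 u_gt0 v_gt0 w_gt0 A r.
pose a t := (1 - t) * u + t * v; pose b t := (1 - t) * v + t * u.
have ab_gt0 t : 0 < t < 1 -> 0 < a t /\ 0 < b t.
  by case/andP => t_gt0 t_lt1; split; rewrite addr_gt0 ?mulr_gt0 ?subr_gt0.
have rE t : r t = spectral_radius (toepA m.+1 (a t) (b t) w).
  by rewrite /r /A (toepA_tr u v w m_gt1) toepA_lincomb; congr (spectral_radius (toepA _ _ _ _)); ring.
pose P t y := w + majorant m (a t) (b t) y.
have P_affine y x1 x2 s : P ((1 - s) * x1 + s * x2) y = (1 - s) * P x1 y + s * P x2 y.
  by rewrite /P /a /b /majorant; ring.
have r_le t y : 0 < t < 1 -> 0 < y -> r t <= P t y.
  by move=> /ab_gt0[? ?] ?; rewrite rE spectral_radius_toepA_le ?ltW.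
have r_eqP t y : 0 < t < 1 -> 0 < y -> r t = P t y <-> b t * y ^+ m.+1 = a t.
  by move=> /ab_gt0[? ?] ?; rewrite rE; apply: spectral_radius_toepA_eqP; rewrite ?ltW.
have r_attained t : 0 < t < 1 -> exists2 y, 0 < y & r t = P t y.
  move=> t01; have [a_gt0 b_gt0] := ab_gt0 t t01.
  have [z z_gt0 bza] := exists_pos_root (ltn0Sn m) a_gt0 b_gt0.
  by exists z => //; apply/r_eqP.
split; first exact: concave_on01_inf_affine P_affine r_le r_attained.
move=> uv; apply: (strictly_concave_on01_inf_affine P_affine r_le r_attained).
move=> t1 t2 y t1_01 t2_01 t12 y_gt0 /(r_eqP _ _ t2_01 y_gt0) bya2.
rewrite lt_neqAle r_le // andbT; apply: contra_neq t12 => /(r_eqP _ _ t1_01 y_gt0) bya1.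
have cross : (v - u) * (u + v) * (t1 - t2) = a t1 * b t2 - a t2 * b t1.
  by rewrite /a /b; ring.
have : (v - u) * (u + v) * (t1 - t2) = 0 by rewrite cross -bya1 -bya2; ring.
by move/eqP; rewrite !mulf_eq0 !subr_eq0 eq_sym (negbTE uv) gt_eqF ?addr_gt0 // => /eqP.
Qed.
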